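(* Let $q\in\mathbb{C}^*$ with $|q|>1$. For all integers $n\geq0$, $$\frac{n+1}{(q;q)_{n+1}}=-\sum_{k=0}^{n}\frac{1}{(q^{k+1}-1)(q;q)_{n-k}}.$$
   Context: $(q;q)_0=1$ and $(q;q)_n=\prod_{k=1}^n(1-q^k)$ for $n\geq1$. *)

From mathcomp Require Import all_boot all_order all_algebra.
From mathcomp Require Import complex.
From mathcomp Require Import reals.
Set Implicit Arguments. Unset Strict Implicit. Unset Printing Implicit Defensive.
Import Order.TTheory GRing.Theory Num.Theory.
Local Open Scope ring_scope.

Definition qpoch {C : comPzRingType} (q : C) (n : nat) : C :=
  \prod_(1 <= k < n.+1) (1 - q ^+ k).

From mathcomp Require Import all_boot all_order all_algebra.
From mathcomp Require Import complex.
From mathcomp Require Import reals.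
From mathcomp Require Import ring.
Import Order.TTheory GRing.Theory Num.Theory.
Local Open Scope ring_scope.

(* With a_n = 1/(q;q)_n and c_k = 1/(1 - q^(k+1)), the claim is that the
   convolution h_n = sum_(i+k=n) a_i c_k equals (n+1) a_(n+1).  Since
   a_(i+1) (1 - q^(i+1)) = a_i, the partial sums of q^i a_i telescope to a_n,
   and writing 1 - q^(n+2) = (1 - q^i) + q^i (1 - q^(n+2-i)) in each term of
   h_(n+1) (1 - q^(n+2)) gives h_(n+1) (1 - q^(n+2)) = h_n + a_(n+1); the
   claim follows by induction on n. *)

Lemma qpoch0 (C : comPzRingType) (q : C) : qpoch q 0 = 1.
Proof. by rewrite /qpoch big_geq. Qed.

Lemma qpochS (C : comPzRingType) (q : C) n :
  qpoch q n.+1 = qpoch q n * (1 - q ^+ n.+1).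
Proof. by rewrite /qpoch big_nat_recr. Qed.

Section QPochhammerConvolution.

Variables (F : fieldType) (q : F).
Hypothesis qX_neq1 : forall m, q ^+ m.+1 != 1.

Lemma subr1X_neq0 m : 1 - q ^+ m.+1 != 0.
Proof. by rewrite subr_eq0 eq_sym qX_neq1. Qed.

Lemma qpoch_neq0 n : qpoch q n != 0.
Proof.
elim: n => [|n IHn]; first by rewrite qpoch0 oner_neq0.
by rewrite qpochS mulf_neq0 ?subr1X_neq0.
Qed.

Lemma qpochVS n : (qpoch q n.+1)^-1 * (1 - q ^+ n.+1) = (qpoch q n)^-1.
Proof. by rewrite qpochS invfM -mulrA mulVf ?mulr1 ?subr1X_neq0. Qed.

Lemma sum_expr_qpochV n : \sum_(i < n.+1) q ^+ i / qpoch q i = (qpoch q n)^-1.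
Proof.
elim: n => [|n IHn]; first by rewrite big_ord1 qpoch0 invr1 mulr1.
rewrite big_ord_recr /= IHn -(qpochVS n); ring.
Qed.

Let conv n := \sum_(i < n.+1) (qpoch q i)^-1 / (1 - q ^+ (n - i).+1).

Lemma convS n : conv n.+1 * (1 - q ^+ n.+2) = conv n + (qpoch q n.+1)^-1.
Proof.
have split_term (i : 'I_n.+2) :
    (qpoch q i)^-1 / (1 - q ^+ (n.+1 - i).+1) * (1 - q ^+ n.+2) =
    (qpoch q i)^-1 * (1 - q ^+ i) / (1 - q ^+ (n.+1 - i).+1)
    + q ^+ i / qpoch q i.
  have -> : q ^+ n.+2 = q ^+ i * q ^+ (n.+1 - i).+1.
    by rewrite -exprD addnS (subnKC (leq_ord i)).
  by field; rewrite ?subr1X_neq0 ?qpoch_neq0.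
rewrite /conv big_distrl /= (eq_bigr _ (fun i _ => split_term i)) big_split /=.
rewrite sum_expr_qpochV big_ord_recl /= expr0 subrr mulr0 mul0r add0r.
congr (_ + _); apply: eq_bigr => i _.
by rewrite /bump /= add1n qpochVS subSS.
Qed.

Lemma conv_qpochV n : conv n = n.+1%:R / qpoch q n.+1.
Proof.
elim: n => [|n IHn].
  by rewrite /conv big_ord1 qpochS qpoch0 invr1 !mul1r.
apply: (mulIf (subr1X_neq0 n.+1)).
by rewrite convS IHn -mulrA qpochVS [in RHS]mulrSr mulrDl mul1r.
Qed.

Lemma natr_div_qpochS n :
  n.+1%:R / qpoch q n.+1 =
  - \sum_(0 <= k < n.+1) 1 / ((q ^+ k.+1 - 1) * qpoch q (n - k)%N).
Proof.
rewrite -conv_qpochV big_nat_rev big_mkord -sumrN /conv.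
apply: eq_bigr => i _; rewrite add0n subSS (subKn (leq_ord i)).
by rewrite div1r invfM -opprB invrN mulrN mulrC.
Qed.

End QPochhammerConvolution.

Local Open Scope complex_scope.

Theorem lemma2p8 (R : realType) (q : R[i]) (hq0 : q != 0) (hq : 1 < `|q|)
  (n : nat) :
  (n.+1)%:R / qpoch q n.+1 =
  - \sum_(0 <= k < n.+1) 1 / ((q ^+ k.+1 - 1) * qpoch q (n - k)%N).
Proof.
apply: natr_div_qpochS => m; apply/eqP => qX_eq1.
by have := exprn_egt1 m.+1 hq; rewrite -normrX qX_eq1 normr1 ltxx.
Qed.
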